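(* Let $G$ and $H$ be graphs, each with at least $2$ vertices. The Cartesian product $G \Box H$ is $1$-perfectly orientable if and only if one of the following holds: (i) $G$ is edgeless and $H$ is $1$-perfectly orientable, or vice versa (i.e. $H$ is edgeless and $G$ is $1$-perfectly orientable); (ii) $G\cong pK_1+qK_2$ and $H\cong rK_1+sK_2$ for some integers $p,q,r,s\ge 0$.
   Context: All graphs are finite and simple. An orientation of a graph $G$ is $1$-perfect if the out-neighborhood of every vertex induces a clique in $G$; $G$ is $1$-perfectly orientable ($1$-p.o.) if it admits a $1$-perfect orientation. The Cartesian product $G\Box H$ has vertex set $V(G)\times V(H)$, with distinct $(u,v),(u',v')$ adjacent iff either $u=u'$ and $vv'\in E(H)$, or $v=v'$ and $uu'\in E(G)$. $G+H$ denotes disjoint union and $kG$ the disjoint union of $k$ copies of $G$; $K_n$ is the complete graph on $n$ vertices. *)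

From mathcomp Require Import all_boot.
Set Implicit Arguments. Unset Strict Implicit. Unset Printing Implicit Defensive.

Definition simple_graph (T : finType) (e : rel T) : Prop :=
  symmetric e /\ irreflexive e.

Definition edgeless (T : finType) (e : rel T) : Prop := forall x y, ~~ e x y.

Definition cart_rel (T1 T2 : finType) (e1 : rel T1) (e2 : rel T2) : rel (T1 * T2) :=
  fun u v => ((u.1 == v.1) && e2 u.2 v.2) || ((u.2 == v.2) && e1 u.1 v.1).

Definition orientation (T : finType) (e o : rel T) : Prop :=
  (forall x y, e x y = o x y || o y x) /\ (forall x y, o x y -> ~~ o y x).

Definition one_perfect (T : finType) (e o : rel T) : Prop :=
  forall v x y, o v x -> o v y -> x != y -> e x y.

Definition one_po (T : finType) (e : rel T) : Prop :=
  exists o : rel T, orientation e o /\ one_perfect e o.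

Definition K1K2_vert (p q : nat) : finType := ('I_p + ('I_q * bool))%type.

Definition K1K2_rel (p q : nat) : rel (K1K2_vert p q) :=
  fun u v => match u, v with
             | inr (i, b), inr (j, c) => (i == j) && (b != c)
             | _, _ => false
             end.

Definition isomorphic (T S : finType) (e : rel T) (f : rel S) : Prop :=
  exists phi : T -> S, bijective phi /\ forall x y, e x y = f (phi x) (phi y).

Definition iso_pK1_qK2 (T : finType) (e : rel T) : Prop :=
  exists p q : nat, isomorphic e (@K1K2_rel p q).

From mathcomp Require Import all_boot.
Set Implicit Arguments. Unset Strict Implicit. Unset Printing Implicit Defensive.

(** A 1-perfect orientation of G □ H restricts to every fibre, so if one factor is
edgeless the other must be 1-p.o., and conversely copies of a 1-p.o. graph can be
oriented independently. If both factors have an edge, neither has a vertex of degree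
two: a vertex v with neighbours x, z in G and an edge y1 y2 in H span a copy of
P_3 □ K_2 (or K_3 □ K_2), and whichever way the rung (v, y1) (v, y2) is oriented, the
1-perfect condition forces the orientation of the surrounding edges until some vertex
has two non-adjacent out-neighbours. Graphs of maximum degree one are exactly
pK_1 + qK_2, and a product of two such graphs is a disjoint union of 4-cycles, edges
and vertices, oriented so that every vertex has out-degree at most one. *)

Definition deg_le1 (T : finType) (e : rel T) := forall x y z, e x y -> e x z -> y = z.

Lemma edgeless_or_edge (T : finType) (e : rel T) : edgeless e \/ exists x y, e x y.
Proof.
have [/existsP [x /existsP [y exy]]|noedge] := boolP [exists x, exists y, e x y].
  by right; exists x, y.
left=> x y; apply: contra noedge => exy.
by apply/existsP; exists x; apply/existsP; exists y.
Qed.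

Section OnePerfect.
Variables (T : finType) (e : rel T).

Lemma one_perfect_reverse o : orientation e o -> one_perfect e o ->
  forall u a b, o u a -> e u b -> a != b -> ~~ e a b -> o b u.
Proof.
move=> [eo _] operf u a b oua; rewrite eo => /orP [oub|//] nab nab'.
by move: (operf _ _ _ oua oub nab); rewrite (negbTE nab').
Qed.

Lemma one_po_embed (S : finType) (f : rel S) (phi : S -> T) :
  injective phi -> (forall x y, f x y = e (phi x) (phi y)) -> one_po e -> one_po f.
Proof.
move=> phi_inj fE [o [[eo oanti] operf]].
exists [rel x y | o (phi x) (phi y)]; split; [split|] => /=.
- by move=> x y; rewrite fE eo.
- by move=> x y; apply: oanti.
- move=> v x y ox oy nxy; rewrite fE; apply: operf ox oy _.
  by rewrite (inj_eq phi_inj).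
Qed.

(* Orient each edge u v towards [step u]: out-degrees are at most one, so the
   1-perfect condition is vacuous. *)
Lemma one_po_of_step (step : T -> T) : symmetric e ->
  (forall u v, e u v -> (v == step u) (+) (u == step v)) -> one_po e.
Proof.
move=> esym stepE; exists [rel u v | e u v && (v == step u)]; split; [split|] => /=.
- move=> u v; rewrite (esym v u); case euv: (e u v) => //=.
  by move: (stepE _ _ euv); case: (v == step u); case: (u == step v).
- move=> u v /andP [euv vu]; rewrite negb_and; move: (stepE _ _ euv).
  by rewrite vu /= => ->; rewrite orbT.
- by move=> w u v /andP [_ /eqP ->] /andP [_ /eqP ->]; rewrite eqxx.
Qed.

End OnePerfect.

Section Matching.
Variables (T : finType) (e : rel T).
Hypotheses (e_simple : simple_graph e) (e_deg1 : deg_le1 e).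

(* An isolated vertex is its own mate. *)
Definition mate x := odflt x [pick y | e x y].

Definition lower x := e x (mate x) && (enum_rank x < enum_rank (mate x)).

Lemma mateP x y : e x y -> mate x = y.
Proof.
by rewrite /mate; case: pickP => [z exz exy|/(_ y) ->//]; apply: e_deg1 exz exy.
Qed.

Lemma mateK : involutive mate.
Proof.
move=> x; case: (pickP (e x)) => [y exy|noedge].
  by rewrite (mateP exy); apply: mateP; rewrite e_simple.1.
have mx : mate x = x by rewrite /mate; case: pickP => // y; rewrite noedge.
by rewrite !mx.
Qed.

Lemma lower_edge x : lower x -> e x (mate x).
Proof. by case/andP. Qed.

Lemma lower_mate x y : e x y -> lower y = ~~ lower x.
Proof.
move=> exy; have eyx : e y x by rewrite e_simple.1.
rewrite /lower (mateP exy) (mateP eyx) exy eyx /= -leqNgt.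
have nyx : enum_rank y != enum_rank x :> nat.
  by apply: contraTneq exy => /val_inj /enum_rank_inj ->; rewrite e_simple.2.
by rewrite ltn_neqAle nyx.
Qed.

Lemma lower_mateF x : lower x -> lower (mate x) = false.
Proof. by move=> lx; rewrite (lower_mate (lower_edge lx)) lx. Qed.

Section LowerEdges.
Variables x y : T.
Hypotheses (lx : lower x) (ly : lower y).

Lemma lower_edgeF : e x y = false.
Proof. by apply/negP => /mateP mx; move: ly; rewrite -mx lower_mateF. Qed.

Lemma mate_edgeF : e (mate x) (mate y) = false.
Proof.
by apply/negP => /mateP; rewrite mateK => xy; move: lx; rewrite xy lower_mateF.
Qed.

Lemma lower_edge_mate : e x (mate y) = (x == y).
Proof.
apply/idP/eqP => [/mateP|->]; last exact: lower_edge.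
exact: (can_inj mateK).
Qed.

End LowerEdges.

Definition isolated_set := [set x | [forall y, ~~ e x y]].
Definition lower_set := [set x | lower x].

Lemma edge_not_isolated x y : e x y -> x \notin isolated_set.
Proof. by move=> exy; rewrite inE negb_forall; apply/existsP; exists y; rewrite exy. Qed.

(* [inr (j, true)] is the lower end and [inr (j, false)] the upper end of the j-th edge. *)
Definition matching_enum (a : K1K2_vert #|isolated_set| #|lower_set|) : T :=
  match a with
  | inl i => enum_val i
  | inr (j, true) => enum_val j
  | inr (j, false) => mate (enum_val j)
  end.

Lemma lower_enum_val (j : 'I_#|lower_set|) : lower (enum_val j).
Proof. by move: (enum_valP j); rewrite inE. Qed.

Lemma matching_enum_notin_isolated j b :
  matching_enum (inr (j, b)) \notin isolated_set.
Proof.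
have ej := lower_edge (lower_enum_val j).
case: b; first exact: edge_not_isolated ej.
by apply: (@edge_not_isolated _ (enum_val j)); rewrite e_simple.1.
Qed.

Lemma matching_enum_edge a b : e (matching_enum a) (matching_enum b) = K1K2_rel a b.
Proof.
have isoE (i : 'I_#|isolated_set|) y : e (enum_val i) y = false.
  by move: (enum_valP i); rewrite inE => /forallP /(_ y) /negbTE.
case: a b => [i|[j bj]] [k|[k bk]] /=; rewrite ?isoE //.
  by case: bj; rewrite e_simple.1 isoE.
have [lj lk] := (lower_enum_val j, lower_enum_val k).
case: bj; case: bk => /=; rewrite ?andbT ?andbF.
- exact: lower_edgeF.
- by rewrite lower_edge_mate // (inj_eq enum_val_inj).
- by rewrite e_simple.1 lower_edge_mate // (inj_eq enum_val_inj) eq_sym.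
- exact: mate_edgeF.
Qed.

Lemma matching_enum_inj : injective matching_enum.
Proof.
have isoP (i : 'I_#|isolated_set|) : enum_val i \in isolated_set by apply: enum_valP.
case=> [i|[j bj]] [k|[k bk]] /=.
- by move/enum_val_inj ->.
- by move=> ik; move: (matching_enum_notin_isolated k bk); rewrite /= -ik isoP.
- by move=> jk; move: (matching_enum_notin_isolated j bj); rewrite /= jk isoP.
have [lj lk] := (lower_enum_val j, lower_enum_val k).
case: bj; case: bk => /=.
- by move/enum_val_inj ->.
- by move=> jk; move: lj; rewrite jk lower_mateF.
- by move=> jk; move: lk; rewrite -jk lower_mateF.
- by move/(can_inj mateK)/enum_val_inj ->.
Qed.

Lemma matching_enum_surj x : exists a, matching_enum a == x.
Proof.
have [xI|xnI] := boolP (x \in isolated_set).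
  by exists (inl (enum_rank_in xI x)); rewrite /= enum_rankK_in.
have [xL|xnL] := boolP (x \in lower_set).
  by exists (inr (enum_rank_in xL x, true)); rewrite /= enum_rankK_in.
have mxL : mate x \in lower_set.
  move: xnI; rewrite inE negb_forall => /existsP [y /negPn exy].
  by rewrite !inE (mateP exy) (lower_mate exy) in xnL *.
by exists (inr (enum_rank_in mxL (mate x), false)); rewrite /= enum_rankK_in ?mateK.
Qed.

Lemma iso_pK1_qK2_of_deg_le1 : iso_pK1_qK2 e.
Proof.
exists #|isolated_set|, #|lower_set|.
pose phi x := xchoose (matching_enum_surj x).
have phiK : cancel phi matching_enum.
  by move=> x; apply/eqP; apply: xchooseP (matching_enum_surj x).
have enumK : cancel matching_enum phi.
  by move=> a; apply: matching_enum_inj; rewrite phiK.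
exists phi; split; first by exists matching_enum.
by move=> x y; rewrite -matching_enum_edge !phiK.
Qed.

End Matching.

Lemma K1K2_deg_le1 p q : deg_le1 (@K1K2_rel p q).
Proof.
case=> [?|[i b]] [?|[j c]] [?|[k d]] //= /andP [/eqP <- bc] /andP [/eqP <- bd].
by congr (inr (_, _)); move: b c d bc bd => [] [] [].
Qed.

Lemma deg_le1_of_iso_pK1_qK2 (T : finType) (e : rel T) : iso_pK1_qK2 e -> deg_le1 e.
Proof.
case=> p [q [phi [phi_bij phiE]]] x y z; rewrite !phiE => /K1K2_deg_le1 yz /yz.
exact: bij_inj.
Qed.

Lemma edge_neq (T : finType) (e : rel T) x y : irreflexive e -> e x y -> x != y.
Proof. by move=> e_irr; apply: contraTneq => ->; rewrite e_irr. Qed.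

Lemma pair_neq1 (T1 T2 : eqType) (x x' : T1) (y y' : T2) :
  x != x' -> (x, y) != (x', y').
Proof. by rewrite xpair_eqE => /negbTE ->. Qed.

Lemma pair_neq2 (T1 T2 : eqType) (x x' : T1) (y y' : T2) :
  y != y' -> (x, y) != (x', y').
Proof. by rewrite xpair_eqE => /negbTE ->; rewrite andbF. Qed.

Section Cartesian.
Variables (T1 T2 : finType) (e1 : rel T1) (e2 : rel T2).
Hypotheses (e1_simple : simple_graph e1) (e2_simple : simple_graph e2).

Local Notation cart := (cart_rel e1 e2).

Lemma cart_rel_fst x x' y : cart (x, y) (x', y) = e1 x x'.
Proof. by rewrite /cart_rel /= eqxx e2_simple.2 andbF. Qed.

Lemma cart_rel_snd x y y' : cart (x, y) (x, y') = e2 y y'.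
Proof. by rewrite /cart_rel /= eqxx e1_simple.2 andbF orbF. Qed.

Lemma cart_rel_diag x x' y y' : x != x' -> y != y' -> cart (x, y) (x', y') = false.
Proof. by rewrite /cart_rel /= => /negbTE -> /negbTE ->. Qed.

Section OrientedProduct.
Variable o : rel (T1 * T2).
Hypotheses (o_orient : orientation cart o) (o_perf : one_perfect cart o).

Lemma rung_not_out_at_deg2 v x z y1 y2 :
  e1 v x -> e1 v z -> x != z -> e2 y1 y2 -> ~~ o (v, y1) (v, y2).
Proof.
move=> evx evz nxz ey; apply/negP => o_rung.
have rev := one_perfect_reverse o_orient o_perf.
have [nvx nvz] := (edge_neq e1_simple.2 evx, edge_neq e1_simple.2 evz).
have [nxv nzv nzx] : [/\ x != v, z != v & z != x] by split; rewrite eq_sym.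
have n12 := edge_neq e2_simple.2 ey; have n21 : y2 != y1 by rewrite eq_sym.
have oxv : o (x, y1) (v, y1).
  by apply: rev o_rung _ _ _; rewrite ?cart_rel_fst ?cart_rel_diag ?pair_neq1.
have ozv : o (z, y1) (v, y1).
  by apply: rev o_rung _ _ _; rewrite ?cart_rel_fst ?cart_rel_diag ?pair_neq1.
have ox : o (x, y2) (x, y1).
  by apply: rev oxv _ _ _; rewrite ?cart_rel_snd ?cart_rel_diag ?pair_neq1.
have oz : o (z, y2) (z, y1).
  by apply: rev ozv _ _ _; rewrite ?cart_rel_snd ?cart_rel_diag ?pair_neq1.
have [exz|nexz] := boolP (e1 x z).
  have ozx : o (z, y2) (x, y2).
    by apply: rev ox _ _ _; rewrite ?cart_rel_fst ?cart_rel_diag ?pair_neq1.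
  by have := o_perf oz ozx (pair_neq2 _ _ n12); rewrite cart_rel_diag.
have ovx : o (v, y2) (x, y2).
  by apply: rev ox _ _ _; rewrite ?cart_rel_fst ?cart_rel_diag ?pair_neq1 // e1_simple.1.
have ovz : o (v, y2) (z, y2).
  by apply: rev oz _ _ _; rewrite ?cart_rel_fst ?cart_rel_diag ?pair_neq1 // e1_simple.1.
by have := o_perf ovx ovz (pair_neq1 _ _ nxz); rewrite cart_rel_fst (negbTE nexz).
Qed.

End OrientedProduct.

Lemma deg_le1_of_one_po_cart y1 y2 : one_po cart -> e2 y1 y2 -> deg_le1 e1.
Proof.
move=> [o [o_orient o_perf]] ey v x z evx evz; apply/eqP; apply: contraT => nxz.
have := cart_rel_snd v y1 y2; rewrite ey o_orient.1 => /orP [] o_rung.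
  by move: (rung_not_out_at_deg2 o_orient o_perf evx evz nxz ey); rewrite o_rung.
have ey' : e2 y2 y1 by rewrite e2_simple.1.
by move: (rung_not_out_at_deg2 o_orient o_perf evx evz nxz ey'); rewrite o_rung.
Qed.

Lemma cart_rel_sym : symmetric cart.
Proof.
by move=> [a b] [c d]; rewrite /cart_rel /= e1_simple.1 e2_simple.1 (eq_sym a) (eq_sym b).
Qed.

Lemma cart_rel_swap u v : cart_rel e2 e1 u v = cart (u.2, u.1) (v.2, v.1).
Proof. by rewrite /cart_rel /= orbC. Qed.

Lemma one_po_cart_swap : one_po cart -> one_po (cart_rel e2 e1).
Proof.
apply: (one_po_embed (phi := fun u => (u.2, u.1))); last exact: cart_rel_swap.
by apply: (can_inj (g := fun u => (u.2, u.1))); case.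
Qed.

Lemma one_po_fibre (x : T1) : one_po cart -> one_po e2.
Proof.
apply: (one_po_embed (phi := pair x)) => [y y' /(congr1 snd)//|y y'].
by rewrite cart_rel_snd.
Qed.

Lemma one_po_cart_edgeless : edgeless e1 -> one_po e2 -> one_po cart.
Proof.
move=> e1_none [o2 [[o2E o2anti] o2_perf]].
have cartE u v : cart u v = (u.1 == v.1) && e2 u.2 v.2.
  by rewrite /cart_rel (negbTE (e1_none _ _)) andbF orbF.
exists [rel u v | (u.1 == v.1) && o2 u.2 v.2]; split; [split|] => /=.
- by move=> u v; rewrite cartE o2E andb_orr [v.1 == _]eq_sym.
- by move=> u v /andP [_ /o2anti /negbTE ->]; rewrite andbF.
- move=> [w1 w2] [x1 x2] [y1 y2] /= /andP [/eqP <- ox] /andP [/eqP <- oy] nxy.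
  by rewrite cartE eqxx (o2_perf _ _ _ ox oy) //; apply: contraNneq nxy => ->.
Qed.

(* The ends of an edge of G □ H differ in the [lower] status of exactly one
   coordinate, so exactly one end passes the test in the direction of the edge. *)
Definition cart_step (u : T1 * T2) : T1 * T2 :=
  if lower e1 u.1 == lower e2 u.2 then (mate e1 u.1, u.2) else (u.1, mate e2 u.2).

Lemma one_po_cart_deg_le1 : deg_le1 e1 -> deg_le1 e2 -> one_po cart.
Proof.
move=> e1_deg1 e2_deg1; apply: (one_po_of_step (step := cart_step) cart_rel_sym).
move=> [a b] [c d] /orP [/andP [/= /eqP <- ebd]|/andP [/= /eqP <- eac]].
- have edb : e2 d b by rewrite e2_simple.1.
  have [nbd ndb] := (edge_neq e2_simple.2 ebd, edge_neq e2_simple.2 edb).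
  rewrite /cart_step /= (mateP e2_deg1 ebd) (mateP e2_deg1 edb).
  rewrite (lower_mate e2_simple e2_deg1 ebd).
  by case: (lower e1 a); case: (lower e2 b);
    rewrite /= !xpair_eqE ?eqxx ?(negbTE nbd) ?(negbTE ndb) ?andbF.
- have eca : e1 c a by rewrite e1_simple.1.
  have [nac nca] := (edge_neq e1_simple.2 eac, edge_neq e1_simple.2 eca).
  rewrite /cart_step /= (mateP e1_deg1 eac) (mateP e1_deg1 eca).
  rewrite (lower_mate e1_simple e1_deg1 eac).
  by case: (lower e1 a); case: (lower e2 b);
    rewrite /= !xpair_eqE ?eqxx ?(negbTE nac) ?(negbTE nca).
Qed.

End Cartesian.

Theorem theorem7 (T1 T2 : finType) (e1 : rel T1) (e2 : rel T2) :
  simple_graph e1 -> simple_graph e2 ->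
  1 < #|T1| -> 1 < #|T2| ->
  (one_po (cart_rel e1 e2) <->
   ((edgeless e1 /\ one_po e2) \/ (edgeless e2 /\ one_po e1)) \/
   (iso_pK1_qK2 e1 /\ iso_pK1_qK2 e2)).
Proof.
move=> e1_simple e2_simple /ltnW/card_gt0P [x0 _] /ltnW/card_gt0P [y0 _]; split.
- move=> po12; have po21 := one_po_cart_swap po12.
  have [e1_none|[x1 [x2 ex]]] := edgeless_or_edge e1.
    by left; left; split=> //; apply: one_po_fibre x0 po12.
  have [e2_none|[y1 [y2 ey]]] := edgeless_or_edge e2.
    by left; right; split=> //; apply: one_po_fibre y0 po21.
  by right; split; apply: iso_pK1_qK2_of_deg_le1 => //;
    [apply: deg_le1_of_one_po_cart po12 ey | apply: deg_le1_of_one_po_cart po21 ex].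
- case=> [[[e1_none po2]|[e2_none po1]]|[iso1 iso2]].
  + exact: one_po_cart_edgeless.
  + exact/one_po_cart_swap/one_po_cart_edgeless.
  + by apply: one_po_cart_deg_le1 => //; apply: deg_le1_of_iso_pK1_qK2.
Qed.
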